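(* Let $P$ be a continuous poset and $M$ a persistence module over $P$. Then $\underline{\underline M}\cong\underline M$, $\overline{\overline M}\cong\overline M$, $\underline{(\overline M)}\cong\underline M$ and $\overline{(\underline M)}\cong\overline M$. In particular $\underline M$ is upper semi-continuous and $\overline M$ is lower semi-continuous.
   Context: Let $P$ be a poset. A subset is directed if nonempty and any two elements have an upper bound in it. $x\ll y$ ($x$ way below $y$) means: for every directed $D$ whose supremum exists with $y\le\sup D$, some $d\in D$ satisfies $x\le d$. $P$ is continuous if for each $p$ the set $\{x:x\ll p\}$ is directed with supremum $p$. $k$ is a commutative ring with unity; a persistence module over $P$ is a functor $M$ from $P$ (as a category, $p\to q$ iff $p\le q$) to $k$-modules, with modules $M_p$ and internal maps $M(p\le q)$. Define persistence modules $\underline M_p=\varprojlim_{x\gg p}M_x$ and $\overline M_p=\varinjlim_{x\ll p}M_x$ (internal maps induced by universal properties); there are canonical morphisms $M\to\underline M$ and $\overline M\to M$. $M$ is upper semi-continuous if $M\to\underline M$ is an isomorphism, and lower semi-continuous if $\overline M\to M$ is an isomorphism. *)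

From HB Require Import structures.
From mathcomp Require Import all_boot all_order all_algebra.
Set Implicit Arguments. Unset Strict Implicit. Unset Printing Implicit Defensive.
Import Order.TTheory GRing.Theory.
Local Open Scope order_scope.

Section Poset.
Context {d : Order.disp_t} (P : porderType d).

Definition directed (D : P -> Prop) : Prop :=
  (exists x, D x) /\
  (forall x y, D x -> D y -> exists z, [/\ D z, x <= z & y <= z]).

Definition is_sup (D : P -> Prop) (s : P) : Prop :=
  (forall x, D x -> x <= s) /\
  (forall u, (forall x, D x -> x <= u) -> s <= u).

Definition way_below (x y : P) : Prop :=
  forall (D : P -> Prop) (s : P), directed D -> is_sup D s -> y <= s ->
    exists2 z, D z & x <= z.

Definition continuous_poset : Prop :=
  forall p, directed (fun x => way_below x p) /\ is_sup (fun x => way_below x p) p.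
End Poset.

Section PMod.
Context (k : comPzRingType) {d : Order.disp_t} (P : porderType d).

Record pmod := PMod {
  pobj :> P -> lmodType k;
  pmap : forall p q : P, p <= q -> {linear pobj p -> pobj q};
  pmap_id : forall p (h : p <= p) v, pmap h v = v;
  pmap_comp : forall p q r (h1 : p <= q) (h2 : q <= r) (h3 : p <= r) v,
      pmap h3 v = pmap h2 (pmap h1 v)
}.

Definition natural (M N : pmod) (f : forall p, {linear M p -> N p}) : Prop :=
  forall p q (h : p <= q) v, f q (pmap M h v) = pmap N h (f p v).

Definition pmod_iso (M N : pmod) : Prop :=
  exists f : forall p, {linear M p -> N p}, natural f /\ forall p, bijective (f p).

(** (L, pi) is a limit of the diagram (M_x)_{x >> p} (pi x is irrelevant
    unless p << x). *)
Definition is_lim_above (M : pmod) (p : P) (L : lmodType k)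
    (pi : forall x, {linear L -> M x}) : Prop :=
  (forall x y (h : x <= y), way_below p x -> way_below p y ->
     forall v, pmap M h (pi x v) = pi y v) /\
  (forall (A : lmodType k) (f : forall x, {linear A -> M x}),
     (forall x y (h : x <= y), way_below p x -> way_below p y ->
        forall a, pmap M h (f x a) = f y a) ->
     exists u : {linear A -> L},
       (forall x, way_below p x -> forall a, pi x (u a) = f x a) /\
       (forall u' : {linear A -> L},
          (forall x, way_below p x -> forall a, pi x (u' a) = f x a) ->
          forall a, u' a = u a)).

Definition is_colim_below (M : pmod) (p : P) (C : lmodType k)
    (iota : forall x, {linear M x -> C}) : Prop :=
  (forall x y (h : x <= y), way_below x p -> way_below y p ->
     forall v, iota y (pmap M h v) = iota x v) /\
  (forall (A : lmodType k) (g : forall x, {linear M x -> A}),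
     (forall x y (h : x <= y), way_below x p -> way_below y p ->
        forall v, g y (pmap M h v) = g x v) ->
     exists u : {linear C -> A},
       (forall x, way_below x p -> forall v, u (iota x v) = g x v) /\
       (forall u' : {linear C -> A},
          (forall x, way_below x p -> forall v, u' (iota x v) = g x v) ->
          forall c, u' c = u c)).

(** UM (with cone maps eps) is  \underline M :  UM_p = lim_{x >> p} M_x,
    internal maps induced by the universal property. *)
Definition is_upper (M UM : pmod) (eps : forall p x, {linear UM p -> M x}) : Prop :=
  (forall p, @is_lim_above M p (UM p) (eps p)) /\
  (forall p q (h : p <= q) x, way_below q x ->
     forall v, eps q x (pmap UM h v) = eps p x v).

(** OM (with cocone maps iota) is  \overline M :  OM_p = colim_{x << p} M_x. *)
Definition is_lower (M OM : pmod) (iota : forall p x, {linear M x -> OM p}) : Prop :=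
  (forall p, @is_colim_below M p (OM p) (iota p)) /\
  (forall p q (h : p <= q) x, way_below x p ->
     forall v, pmap OM h (iota p x v) = iota q x v).

Definition usc (M UM : pmod) (eps : forall p x, {linear UM p -> M x}) : Prop :=
  exists eta : forall p, {linear M p -> UM p},
    [/\ natural eta,
        (forall p x (h : p <= x), way_below p x ->
           forall v, eps p x (eta p v) = pmap M h v)
      & forall p, bijective (eta p)].

Definition lsc (M OM : pmod) (iota : forall p x, {linear M x -> OM p}) : Prop :=
  exists th : forall p, {linear OM p -> M p},
    [/\ natural th,
        (forall p x (h : x <= p), way_below x p ->
           forall v, th p (iota p x v) = pmap M h v)
      & forall p, bijective (th p)].
End PMod.

(** The four comparison maps are the canonical ones: the unit [UM -> UUM],
    the counit [OOM -> OM], and the images [U(OM -> M)] and [O(M -> UM)] of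
    the counit and unit under the functors [U] and [O].  Their inverses come
    from interpolation in a continuous poset: for [p << y] choose [p << m << y]
    and send [b] in [UUM_p] to the compatible family [eps m y (eps p m b)] in
    [M_y], and similarly in the three other cases.  Directedness of the
    elements way below [y] makes this independent of [m], and the uniqueness
    parts of the universal properties make the maps mutually inverse. *)

From Pilot Require Import Defs.
From HB Require Import structures.
From mathcomp Require Import all_boot all_order all_algebra.
From Stdlib Require Import ClassicalEpsilon.
Import Defs.

Set Implicit Arguments. Unset Strict Implicit. Unset Printing Implicit Defensive.
Import Order.TTheory GRing.Theory.
Local Open Scope order_scope.

Lemma dependent_choice (A : Type) (B : A -> Type) (R : forall a, B a -> Prop) :
  (forall a, exists b, R a b) -> exists f : forall a, B a, forall a, R a (f a).
Proof.
move=> hR; exists (fun a => proj1_sig (constructive_indefinite_description _ (hR a))).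
by move=> a; case: constructive_indefinite_description.
Qed.

Section WayBelow.
Context {d : Order.disp_t} {P : porderType d}.
Implicit Types x y z : P.

Lemma wbW x y : way_below x y -> x <= y.
Proof.
move=> xy; have dy : directed (fun z => z = y).
  by split; [exists y | move=> a b -> ->; exists y].
have sy : is_sup (fun z => z = y) y by split; [move=> z -> | move=> u; apply].
by have [z -> ] := xy _ _ dy sy (lexx y).
Qed.

Lemma wb_le_trans x y z : way_below x y -> y <= z -> way_below x z.
Proof. by move=> xy yz D s dD sD zs; apply: xy dD sD _; exact: le_trans yz zs. Qed.

Lemma le_wb_trans x y z : x <= y -> way_below y z -> way_below x z.
Proof.
move=> xy yz D s dD sD zs; have [w Dw yw] := yz D s dD sD zs.
by exists w => //; exact: le_trans xy yw.
Qed.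

Hypothesis Pc : continuous_poset P.

Lemma wb_ub x y z : way_below x z -> way_below y z ->
  exists w, [/\ way_below w z, x <= w & y <= w].
Proof. by move=> xz yz; have [[_ /(_ x y xz yz)]] := Pc z. Qed.

(* The elements [u << v << z] form a directed set with supremum [z]. *)
Lemma wb_interpolate x z : way_below x z -> exists y, way_below x y /\ way_below y z.
Proof.
move=> xz; pose D u := exists v, way_below u v /\ way_below v z.
have dD : directed D.
  split.
    have [[[v vz] _] _] := Pc z; have [[[u uv] _] _] := Pc v.
    by exists u, v.
  move=> u1 u2 [v1 [u1v1 v1z]] [v2 [u2v2 v2z]].
  have [w [wz v1w v2w]] := wb_ub v1z v2z.
  have [t [tw u1t u2t]] := wb_ub (wb_le_trans u1v1 v1w) (wb_le_trans u2v2 v2w).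
  by exists t; split => //; exists w.
have sD : is_sup D z.
  split=> [u [v [uv vz]]|u Dleu]; first exact: le_trans (wbW uv) (wbW vz).
  have [_ [_ supz]] := Pc z; apply: supz => v vz.
  by have [_ [_ supv]] := Pc v; apply: supv => w wv; apply: Dleu; exists v.
have [u [v [uv vz]] xu] := xz D z dD sD (lexx z).
by exists v; split => //; exact: le_wb_trans xu uv.
Qed.

Lemma wb_interpolant : exists mid : P -> P -> P,
  forall x z, way_below x z -> way_below x (mid x z) /\ way_below (mid x z) z.
Proof.
have /choice[mid midP] : forall xz : P * P, exists m,
    way_below xz.1 xz.2 -> way_below xz.1 m /\ way_below m xz.2.
  move=> [x z]; case: (excluded_middle_informative (way_below x z)) => [xz|nxz].
    by have [y xyz] := wb_interpolate xz; exists y.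
  by exists x => /nxz.
by exists (fun x z => mid (x, z)) => x z; apply: (midP (x, z)).
Qed.
End WayBelow.

Section Modules.
Context (k : comPzRingType) {d : Order.disp_t} {P : porderType d}.
Implicit Types M N : pmod k P.

(* The internal map, extended by [0] off the order relation so that it forms
   a total family, as the universal properties require. *)
Definition pmap0 M (p x : P) : {linear M p -> M x} :=
  if excluded_middle_informative (p <= x) is left h then pmap M h else \0%R.

Lemma pmap0E M p x (h : p <= x) v : pmap0 M p x v = pmap M h v.
Proof.
by rewrite /pmap0; case: excluded_middle_informative => [h'|//]; rewrite (bool_irrelevance h' h).
Qed.

Lemma pmap_compE M (p q r : P) (h1 : p <= q) (h2 : q <= r) (h3 : p <= r) v :
  pmap M h2 (pmap M h1 v) = pmap M h3 v.
Proof. by rewrite -pmap_comp. Qed.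

Lemma pmap_pmap0 M (p x y : P) (h : x <= y) : p <= x ->
  forall v, pmap M h (pmap0 M p x v) = pmap0 M p y v.
Proof.
by move=> px v; rewrite (pmap0E px) (pmap0E (le_trans px h)); apply: pmap_compE.
Qed.

Lemma pmap0_pmap M (p q x : P) (h : p <= q) : q <= x ->
  forall v, pmap0 M q x (pmap M h v) = pmap0 M p x v.
Proof.
by move=> qx v; rewrite (pmap0E qx) (pmap0E (le_trans h qx)); apply: pmap_compE.
Qed.

Definition lin_invertible (U V : lmodType k) (f : {linear U -> V}) :=
  exists g : {linear V -> U}, cancel f g /\ cancel g f.

Lemma lin_invertible_bij (U V : lmodType k) (f : {linear U -> V}) :
  lin_invertible f -> bijective f.
Proof. by case=> g [fK gK]; exists g. Qed.

Lemma natural_inv M N (f : forall p, {linear M p -> N p})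
    (g : forall p, {linear N p -> M p}) :
  natural f -> (forall p, cancel (f p) (g p)) -> (forall p, cancel (g p) (f p)) ->
  natural g.
Proof. by move=> f_nat fK gK p q h v; rewrite -{1}(gK p v) -f_nat fK. Qed.

Lemma natural_iso M N (f : forall p, {linear M p -> N p}) :
  natural f -> (forall p, lin_invertible (f p)) -> pmod_iso M N /\ pmod_iso N M.
Proof.
move=> f_nat f_inv; have [g fgK] := @dependent_choice _ (fun p => {linear N p -> M p})
  (fun p g => cancel (f p) g /\ cancel g (f p)) f_inv.
have fK p := (fgK p).1; have gK p := (fgK p).2.
split; first by exists f; split=> // p; exact: Bijective (fK p) (gK p).
exists g; split=> [|p]; first exact: natural_inv f_nat fK gK.
exact: Bijective (gK p) (fK p).
Qed.

Section Limit.
Variables (N : pmod k P) (p : P) (L : lmodType k) (pi : forall x, {linear L -> N x}).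
Hypothesis limL : is_lim_above p pi.

Lemma lim_above_eq (A : lmodType k) (u1 u2 : {linear A -> L}) :
  (forall x, way_below p x -> forall a, pi x (u1 a) = pi x (u2 a)) -> u1 =1 u2.
Proof.
move=> eq_pi a; have [pi_cone pi_univ] := limL.
have [u [_ u_uniq]] := pi_univ A (fun x => pi x \o u1)
   (fun x y h px py b => pi_cone x y h px py (u1 b)).
by rewrite (u_uniq u1 (fun _ _ _ => erefl)) (u_uniq u2 (fun x px b => esym (eq_pi x px b))).
Qed.

Lemma lim_above_lift_interp : continuous_poset P ->
  forall (A : lmodType k) (f : forall m y, {linear A -> N y}),
  (forall m m' y, m <= m' -> way_below p m -> way_below m' y -> f m y =1 f m' y) ->
  (forall m y y' (h : y <= y'), way_below p m -> way_below m y ->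
     forall a, pmap N h (f m y a) = f m y' a) ->
  exists u : {linear A -> L},
    forall m y, way_below p m -> way_below m y -> forall a, pi y (u a) = f m y a.
Proof.
move=> Pc A f f_mid f_cone.
have [mid midP] := wb_interpolant Pc.
have f_indep m1 m2 y : way_below p m1 -> way_below m1 y ->
    way_below p m2 -> way_below m2 y -> f m1 y =1 f m2 y.
  move=> pm1 m1y pm2 m2y a; have [m [my m1m m2m]] := wb_ub Pc m1y m2y.
  by rewrite (f_mid m1 m y) // (f_mid m2 m y).
have f_mid_cone y y' (h : y <= y') : way_below p y -> way_below p y' ->
    forall a, pmap N h (f (mid p y) y a) = f (mid p y') y' a.
  move=> py py' a; have [pm my] := midP p y py; have [pm' m'y'] := midP p y' py'.
  by rewrite f_cone // (f_indep _ _ _ pm (wb_le_trans my h) pm' m'y').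
have [u [uE _]] := limL.2 A (fun y => f (mid p y) y) f_mid_cone.
exists u => m y pm my a; have py := wb_le_trans pm (wbW my).
by have [pm' m'y] := midP p y py; rewrite uE // (f_indep _ _ _ pm' m'y pm my).
Qed.
End Limit.

Section Colimit.
Variables (N : pmod k P) (p : P) (C : lmodType k) (io : forall x, {linear N x -> C}).
Hypothesis colimC : is_colim_below p io.

Lemma colim_below_eq (A : lmodType k) (u1 u2 : {linear C -> A}) :
  (forall x, way_below x p -> forall v, u1 (io x v) = u2 (io x v)) -> u1 =1 u2.
Proof.
move=> eq_io c; have [io_cocone io_univ] := colimC.
have [u [_ u_uniq]] := io_univ A (fun x => u1 \o io x)
   (fun x y h xp yp v => f_equal u1 (io_cocone x y h xp yp v)).
by rewrite (u_uniq u1 (fun _ _ _ => erefl)) (u_uniq u2 (fun x xp v => esym (eq_io x xp v))).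
Qed.

Lemma colim_below_lift_interp : continuous_poset P ->
  forall (A : lmodType k) (g : forall m x, {linear N x -> A}),
  (forall m m' x, m <= m' -> way_below x m -> way_below m' p -> g m x =1 g m' x) ->
  (forall m x x' (h : x <= x'), way_below x' m -> way_below m p ->
     forall v, g m x' (pmap N h v) = g m x v) ->
  exists u : {linear C -> A},
    forall m x, way_below x m -> way_below m p -> forall v, u (io x v) = g m x v.
Proof.
move=> Pc A g g_mid g_cocone.
have [mid midP] := wb_interpolant Pc.
have g_indep m1 m2 x : way_below x m1 -> way_below m1 p ->
    way_below x m2 -> way_below m2 p -> g m1 x =1 g m2 x.
  move=> xm1 m1p xm2 m2p v; have [m [mp m1m m2m]] := wb_ub Pc m1p m2p.
  by rewrite (g_mid m1 m x) // (g_mid m2 m x).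
have g_mid_cocone x x' (h : x <= x') : way_below x p -> way_below x' p ->
    forall v, g (mid x' p) x' (pmap N h v) = g (mid x p) x v.
  move=> xp x'p v; have [xm mp] := midP x p xp; have [x'm' m'p] := midP x' p x'p.
  by rewrite g_cocone // (g_indep _ _ _ (le_wb_trans h x'm') m'p xm mp).
have [u [uE _]] := colimC.2 A (fun x => g (mid x p) x) g_mid_cocone.
exists u => m x xm mp v; have xp := wb_le_trans xm (wbW mp).
by have [xm' m'p] := midP x p xp; rewrite uE // (g_indep _ _ _ xm' m'p xm mp).
Qed.
End Colimit.

Section Upper.
Variables (N UN : pmod k P) (eps : forall p x, {linear UN p -> N x}).
Hypothesis upN : is_upper eps.

Lemma upper_lift (A : pmod k P) (g : forall p x, {linear A p -> N x}) :
  (forall p x y (h : x <= y), way_below p x -> way_below p y ->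
     forall a, pmap N h (g p x a) = g p y a) ->
  (forall p q (h : p <= q) x, way_below q x -> forall a, g q x (pmap A h a) = g p x a) ->
  exists u : forall p, {linear A p -> UN p},
    natural u /\ forall p x, way_below p x -> forall a, eps p x (u p a) = g p x a.
Proof.
move=> g_cone g_nat.
have /dependent_choice[u uE] : forall p, exists u : {linear A p -> UN p},
    forall x, way_below p x -> forall a, eps p x (u a) = g p x a.
  by move=> p; have [u [uE _]] := (upN.1 p).2 _ (g p) (g_cone p); exists u.
exists u; split=> // p q h a.
apply: (lim_above_eq (upN.1 q) (u1 := u q \o pmap A h) (u2 := pmap UN h \o u p) _ a).
move=> x qx {}a /=; have px := le_wb_trans h qx.
by rewrite uE // upN.2 // uE // g_nat.
Qed.

Lemma upper_unit : exists eta : forall p, {linear N p -> UN p},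
  natural eta /\
  forall p x (h : p <= x), way_below p x -> forall v, eps p x (eta p v) = pmap N h v.
Proof.
have [eta [eta_nat etaE]] := @upper_lift N (pmap0 N)
  (fun p x y h px _ => pmap_pmap0 h (wbW px)) (fun p q h x qx => pmap0_pmap h (wbW qx)).
by exists eta; split=> // p x h px v; rewrite etaE // pmap0E.
Qed.

Lemma upper_map (N' UN' : pmod k P) (eps' : forall p x, {linear UN' p -> N' x})
    (f : forall p, {linear N' p -> N p}) :
  is_upper eps' -> natural f ->
  exists Uf : forall p, {linear UN' p -> UN p},
    natural Uf /\ forall p x, way_below p x -> forall a, eps p x (Uf p a) = f x (eps' p x a).
Proof.
move=> upN' f_nat; apply: (@upper_lift UN' (fun p x => f x \o eps' p x)) => /=.
- by move=> p x y h px py a; rewrite -f_nat (upN'.1 p).1.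
- by move=> p q h x qx a; rewrite upN'.2.
Qed.

Variable eta : forall p, {linear N p -> UN p}.
Hypothesis etaE :
  forall p x (h : p <= x), way_below p x -> forall v, eps p x (eta p v) = pmap N h v.

Lemma upper_unit_eps x m (xm : way_below x m) a : eta m (eps x m a) = pmap UN (wbW xm) a.
Proof.
apply: (lim_above_eq (upN.1 m) (u1 := eta m \o eps x m) (u2 := pmap UN (wbW xm)) _ a).
move=> z mz {}a /=; have xz := wb_le_trans xm (wbW mz).
by rewrite (etaE (wbW mz)) // upN.2 // ((upN.1 x).1 m z).
Qed.
End Upper.

Section Lower.
Variables (N ON : pmod k P) (iota : forall p x, {linear N x -> ON p}).
Hypothesis loN : is_lower iota.

Lemma lower_lift (A : pmod k P) (g : forall p x, {linear N x -> A p}) :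
  (forall p x y (h : x <= y), way_below x p -> way_below y p ->
     forall v, g p y (pmap N h v) = g p x v) ->
  (forall p q (h : p <= q) x, way_below x p -> forall v, pmap A h (g p x v) = g q x v) ->
  exists u : forall p, {linear ON p -> A p},
    natural u /\ forall p x, way_below x p -> forall v, u p (iota p x v) = g p x v.
Proof.
move=> g_cocone g_nat.
have /dependent_choice[u uE] : forall p, exists u : {linear ON p -> A p},
    forall x, way_below x p -> forall v, u (iota p x v) = g p x v.
  by move=> p; have [u [uE _]] := (loN.1 p).2 _ (g p) (g_cocone p); exists u.
exists u; split=> // p q h c.
apply: (colim_below_eq (loN.1 p) (u1 := u q \o pmap ON h) (u2 := pmap A h \o u p) _ c).
move=> x xp v /=; have xq := wb_le_trans xp h.
by rewrite loN.2 // !uE // g_nat.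
Qed.

Lemma lower_counit : exists th : forall p, {linear ON p -> N p},
  natural th /\
  forall p x (h : x <= p), way_below x p -> forall v, th p (iota p x v) = pmap N h v.
Proof.
have [th [th_nat thE]] := @lower_lift N (fun p x => pmap0 N x p)
  (fun p x y h _ yp => pmap0_pmap h (wbW yp)) (fun p q h x xp => pmap_pmap0 h (wbW xp)).
by exists th; split=> // p x h xp v; rewrite thE // pmap0E.
Qed.

Lemma lower_map (N' ON' : pmod k P) (iota' : forall p x, {linear N' x -> ON' p})
    (f : forall p, {linear N p -> N' p}) :
  is_lower iota' -> natural f ->
  exists Of : forall p, {linear ON p -> ON' p},
    natural Of /\ forall p x, way_below x p -> forall v, Of p (iota p x v) = iota' p x (f x v).
Proof.
move=> loN' f_nat; apply: (@lower_lift ON' (fun p x => iota' p x \o f x)) => /=.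
- by move=> p x y h xp yp v; rewrite f_nat (loN'.1 p).1.
- by move=> p q h x xp v; rewrite loN'.2.
Qed.

Variable th : forall p, {linear ON p -> N p}.
Hypothesis thE :
  forall p x (h : x <= p), way_below x p -> forall v, th p (iota p x v) = pmap N h v.

Lemma lower_iota_counit m x (mx : way_below m x) c : iota x m (th m c) = pmap ON (wbW mx) c.
Proof.
apply: (colim_below_eq (loN.1 m) (u1 := iota x m \o th m) (u2 := pmap ON (wbW mx)) _ c).
move=> z zm v /=; have zx := wb_le_trans zm (wbW mx).
by rewrite (thE (wbW zm)) // loN.2 // ((loN.1 x).1 z m).
Qed.
End Lower.

Section Comparison.
Hypothesis Pc : continuous_poset P.
Variables (M UM OM : pmod k P).
Variables (eps1 : forall p x, {linear UM p -> M x}) (iota1 : forall p x, {linear M x -> OM p}).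
Hypotheses (upM : is_upper eps1) (loM : is_lower iota1).

Lemma upper_unit_invertible (UUM : pmod k P) (eps2 : forall p x, {linear UUM p -> UM x})
    (eta : forall p, {linear UM p -> UUM p}) :
  is_upper eps2 ->
  (forall p x (h : p <= x), way_below p x -> forall v, eps2 p x (eta p v) = pmap UM h v) ->
  forall p, lin_invertible (eta p).
Proof.
move=> upUM etaE p.
have [||psi psiE] := lim_above_lift_interp (upM.1 p) Pc
  (f := fun m y => eps1 m y \o eps2 p m).
- move=> m m' y mm' pm m'y b /=; have pm' := wb_le_trans pm mm'.
  by rewrite -(upM.2 m m' mm' y m'y) ((upUM.1 p).1 m m' mm' pm pm').
- move=> m y y' h pm my b; exact: (upM.1 m).1 _ _ h my (wb_le_trans my h) _.
exists psi; split=> [a|b].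
  apply: (lim_above_eq (upM.1 p) (u1 := psi \o eta p) (u2 := idfun) _ a) => y py {}a /=.
  have [m [pm my]] := wb_interpolate Pc py.
  by rewrite (psiE m y pm my) /= (etaE _ _ (wbW pm) pm) upM.2.
apply: (lim_above_eq (upUM.1 p) (u1 := eta p \o psi) (u2 := idfun) _ b) => x px {}b /=.
rewrite (etaE _ _ (wbW px) px).
apply: (lim_above_eq (upM.1 x) (u1 := pmap UM (wbW px) \o psi) (u2 := eps2 p x) _ b).
by move=> y xy {}b /=; rewrite upM.2 // (psiE x y px xy) /=.
Qed.

Lemma lower_counit_invertible (OOM : pmod k P) (iota2 : forall p x, {linear OM x -> OOM p})
    (th : forall p, {linear OOM p -> OM p}) :
  is_lower iota2 ->
  (forall p x (h : x <= p), way_below x p -> forall v, th p (iota2 p x v) = pmap OM h v) ->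
  forall p, lin_invertible (th p).
Proof.
move=> loOM thE p.
have [||psi psiE] := colim_below_lift_interp (loM.1 p) Pc
  (g := fun m y => iota2 p m \o iota1 m y).
- move=> m m' y mm' ym m'p v /=; have mp := le_wb_trans mm' m'p.
  by rewrite -((loOM.1 p).1 m m' mm' mp m'p) (loM.2 m m' mm' y ym).
- move=> m y y' h y'm mp v; exact: f_equal _ ((loM.1 m).1 _ _ h (le_wb_trans h y'm) y'm _).
exists psi; split=> [c|v].
  apply: (colim_below_eq (loOM.1 p) (u1 := psi \o th p) (u2 := idfun) _ c) => x xp {}c /=.
  rewrite (thE _ _ (wbW xp) xp).
  apply: (colim_below_eq (loM.1 x) (u1 := psi \o pmap OM (wbW xp)) (u2 := iota2 p x) _ c).
  by move=> y yx {}c /=; rewrite loM.2 // (psiE x y yx xp) /=.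
apply: (colim_below_eq (loM.1 p) (u1 := th p \o psi) (u2 := idfun) _ v) => y yp {}v /=.
have [m [ym mp]] := wb_interpolate Pc yp.
by rewrite (psiE m y ym mp) /= (thE _ _ (wbW mp) mp) loM.2.
Qed.

Lemma upper_map_counit_invertible (UOM : pmod k P) (eps3 : forall p x, {linear UOM p -> OM x})
    (th : forall p, {linear OM p -> M p}) (Uth : forall p, {linear UOM p -> UM p}) :
  is_upper eps3 ->
  (forall p x (h : x <= p), way_below x p -> forall v, th p (iota1 p x v) = pmap M h v) ->
  (forall p x, way_below p x -> forall b, eps1 p x (Uth p b) = th x (eps3 p x b)) ->
  forall p, lin_invertible (Uth p).
Proof.
move=> upOM thE UthE p.
have [||psi psiE] := lim_above_lift_interp (upOM.1 p) Pc
  (f := fun m x => iota1 x m \o eps1 p m).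
- move=> m m' x mm' pm m'x a /=.
  have mx := le_wb_trans mm' m'x; have pm' := wb_le_trans pm mm'.
  by rewrite -((loM.1 x).1 m m' mm' mx m'x) ((upM.1 p).1 m m' mm' pm pm').
- by move=> m x x' h pm mx a; rewrite /= loM.2.
exists psi; split=> [b|a].
  apply: (lim_above_eq (upOM.1 p) (u1 := psi \o Uth p) (u2 := idfun) _ b) => x px {}b /=.
  have [m [pm mx]] := wb_interpolate Pc px.
  by rewrite (psiE m x pm mx) /= (UthE _ _ pm) (lower_iota_counit loM thE mx) (upOM.1 p).1.
apply: (lim_above_eq (upM.1 p) (u1 := Uth p \o psi) (u2 := idfun) _ a) => y py {}a /=.
have [m [pm my]] := wb_interpolate Pc py.
by rewrite (UthE _ _ py) (psiE m y pm my) /= (thE _ _ (wbW my) my) (upM.1 p).1.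
Qed.

Lemma lower_map_unit_invertible (OUM : pmod k P) (iota3 : forall p x, {linear UM x -> OUM p})
    (eta : forall p, {linear M p -> UM p}) (Oeta : forall p, {linear OM p -> OUM p}) :
  is_lower iota3 ->
  (forall p x (h : p <= x), way_below p x -> forall v, eps1 p x (eta p v) = pmap M h v) ->
  (forall p x, way_below x p -> forall v, Oeta p (iota1 p x v) = iota3 p x (eta x v)) ->
  forall p, lin_invertible (Oeta p).
Proof.
move=> loUM etaE OetaE p.
have [||psi psiE] := colim_below_lift_interp (loUM.1 p) Pc
  (g := fun m x => iota1 p m \o eps1 x m).
- move=> m m' x mm' xm m'p a /=.
  have mp := le_wb_trans mm' m'p; have xm' := wb_le_trans xm mm'.
  by rewrite -((loM.1 p).1 m m' mm' mp m'p) ((upM.1 x).1 m m' mm' xm xm').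
- by move=> m x x' h x'm mp a; rewrite /= upM.2.
exists psi; split=> [c|c].
  apply: (colim_below_eq (loM.1 p) (u1 := psi \o Oeta p) (u2 := idfun) _ c) => x xp v /=.
  have [m [xm mp]] := wb_interpolate Pc xp.
  by rewrite (OetaE _ _ xp) (psiE m x xm mp) /= (etaE _ _ (wbW xm) xm) (loM.1 p).1.
apply: (colim_below_eq (loUM.1 p) (u1 := Oeta p \o psi) (u2 := idfun) _ c) => x xp a /=.
have [m [xm mp]] := wb_interpolate Pc xp.
by rewrite (psiE m x xm mp) /= (OetaE _ _ mp) (upper_unit_eps upM etaE xm) (loUM.1 p).1.
Qed.
End Comparison.
End Modules.

Theorem mainTheorem3 (k : comPzRingType) (d : Order.disp_t) (P : porderType d)
  (M UM UUM OM OOM UOM OUM : pmod k P)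
  (eps1 : forall p x, {linear UM p -> M x})
  (eps2 : forall p x, {linear UUM p -> UM x})
  (iota1 : forall p x, {linear M x -> OM p})
  (iota2 : forall p x, {linear OM x -> OOM p})
  (eps3 : forall p x, {linear UOM p -> OM x})
  (iota3 : forall p x, {linear UM x -> OUM p}) :
  continuous_poset P ->
  is_upper eps1 -> is_upper eps2 ->
  is_lower iota1 -> is_lower iota2 ->
  is_upper eps3 -> is_lower iota3 ->
  (pmod_iso UUM UM /\ pmod_iso OOM OM /\ pmod_iso UOM UM /\ pmod_iso OUM OM) /\
  (usc eps2 /\ lsc iota2).
Proof.
move=> Pc upM upUM loM loOM upOM loUM.
have [etaM [etaM_nat etaME]] := upper_unit upM.
have [thM [thM_nat thME]] := lower_counit loM.
have [etaUM [etaUM_nat etaUME]] := upper_unit upUM.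
have [thOM [thOM_nat thOME]] := lower_counit loOM.
have [Uth [Uth_nat UthE]] := upper_map upM upOM thM_nat.
have [Oeta [Oeta_nat OetaE]] := lower_map loM loUM etaM_nat.
have etaUM_inv := upper_unit_invertible Pc upM upUM etaUME.
have thOM_inv := lower_counit_invertible Pc loM loOM thOME.
have Uth_inv := upper_map_counit_invertible Pc upM loM upOM thME UthE.
have Oeta_inv := lower_map_unit_invertible Pc upM loM loUM etaME OetaE.
split; [split; [|split; [|split]] | split].
- exact: (natural_iso etaUM_nat etaUM_inv).2.
- exact: (natural_iso thOM_nat thOM_inv).1.
- exact: (natural_iso Uth_nat Uth_inv).1.
- exact: (natural_iso Oeta_nat Oeta_inv).2.
- by exists etaUM; split=> // p; exact: lin_invertible_bij.
- by exists thOM; split=> // p; exact: lin_invertible_bij.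
Qed.
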